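(* Let $k(\cdot\mid\theta)$ be the $\mathrm{N}(\theta,1)$ density, $q_0$ the $\mathrm{N}(0,1)$ density, $\theta^*\in\mathbb{R}$ and $x_1=\dots=x_n=\theta^*$. Then for every $s=1,\dots,n$ and every partition $A=\{A_1,\dots,A_s\}\in\tau_s(n)$, $$\frac{\prod_{j=1}^sm(x_{A_j})}{m(x_{1:n})}=\Big\{\frac{n+1}{\prod_{j=1}^s(a_j+1)}\Big\}^{1/2}\exp\Big\{\frac{{\theta^*}^2}{2}\Big(-\frac{n^2}{n+1}+\sum_{j=1}^s\frac{a_j^2}{a_j+1}\Big)\Big\}\le\Big(\frac{n}{\prod_{j=1}^sa_j}\Big)^{1/2}.$$
   Context: $\tau_s(n)$ is the set of partitions of $\{1,\dots,n\}$ into $s$ nonempty blocks, $a_j=|A_j|$, and for $B\subseteq\{1,\dots,n\}$, $m(x_B)=\int\prod_{i\in B}k(x_i\mid\theta)q_0(\theta)d\theta$. *)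

From HB Require Import structures.
From mathcomp Require Import all_boot all_order all_algebra.
From mathcomp Require Import all_classical all_reals all_analysis.
Set Implicit Arguments. Unset Strict Implicit. Unset Printing Implicit Defensive.
Import Order.TTheory GRing.Theory Num.Theory.
Local Open Scope ring_scope.

Definition gauss_pdf {R : realType} (mu y : R) : R :=
  (Num.sqrt (2 * pi))^-1 * expR (- ((y - mu) ^+ 2) / 2).

Definition kern {R : realType} (y theta : R) : R := gauss_pdf theta y.

Definition q0 {R : realType} (theta : R) : R := gauss_pdf 0 theta.

Definition marg {R : realType} {n : nat} (x : 'I_n -> R) (B : {set 'I_n}) : R :=
  Rintegral (@lebesgue_measure R) [set: R]
    (fun theta => (\prod_(i in B) kern (x i) theta) * q0 theta).

From HB Require Import structures.
From mathcomp Require Import all_boot all_order all_algebra.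
From mathcomp Require Import all_classical all_reals all_analysis.
From mathcomp Require Import ring lra.

Set Implicit Arguments.
Unset Strict Implicit.
Unset Printing Implicit Defensive.
Import Order.TTheory GRing.Theory Num.Theory.
Local Open Scope ring_scope.

(* Completing the square in theta, the integrand of m(x_B) for a = |B| equal
   observations t is a Gaussian in theta with mean a t/(a+1) and variance
   1/(a+1); hence m(x_B) has the closed form [marg_equal t a] below.  The
   ratio is then a product of such closed forms.  Its exponential factor is at
   most 1 because a |-> a/(a+1) is nondecreasing and every block size is at
   most n, and (n+1) prod a_j <= n prod (a_j+1) for the same reason. *)

Lemma sqrtr_prod (R : rcfType) (I : finType) (P : {pred I}) (F : I -> R) :
  (forall i, i \in P -> 0 <= F i) ->
  \prod_(i in P) Num.sqrt (F i) = Num.sqrt (\prod_(i in P) F i).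
Proof.
by move=> F0; elim/big_rec2: _ => [|i y _ Pi ->]; rewrite ?sqrtr1 // sqrtrM ?F0.
Qed.

Lemma sqr_div_add1_le (R : realFieldType) (a b : R) :
  0 <= a -> a <= b -> a ^+ 2 / (a + 1) <= a * (b / (b + 1)).
Proof.
move=> a0 ab; rewrite -subr_ge0.
have -> : a * (b / (b + 1)) - a ^+ 2 / (a + 1) = a * (b - a) / ((a + 1) * (b + 1)).
  by field; rewrite !gt_eqF //; lra.
by rewrite divr_ge0 ?mulr_ge0 //; lra.
Qed.

Lemma leq_term_sum (I : finType) (P : {pred I}) (a : I -> nat) i :
  i \in P -> (a i <= \sum_(j in P) a j)%N.
Proof. by move=> Pi; rewrite (bigD1 i) ?leq_addr. Qed.

Lemma sum_sqr_div_succ_le (R : realFieldType) (I : finType) (P : {pred I})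
    (a : I -> nat) (n : nat) :
  (\sum_(i in P) a i)%N = n ->
  \sum_(i in P) (a i)%:R ^+ 2 / (a i).+1%:R <= n%:R ^+ 2 / n.+1%:R :> R.
Proof.
move=> sum_a.
have -> : n%:R ^+ 2 / n.+1%:R = \sum_(i in P) (a i)%:R * (n%:R / (n%:R + 1)) :> R.
  by rewrite -mulr_suml -natr_sum sum_a -natr1; field; rewrite natr1 pnatr_eq0.
apply: ler_sum => i Pi; rewrite -natr1.
by apply: sqr_div_add1_le; rewrite ?ler0n // ler_nat -sum_a leq_term_sum.
Qed.

Lemma succ_mul_prod_le (I : finType) (P : {pred I}) (a : I -> nat) (n : nat) i0 :
  i0 \in P -> (a i0 <= n)%N ->
  (n.+1 * \prod_(i in P) a i <= n * \prod_(i in P) (a i).+1)%N.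
Proof.
move=> Pi0 ai0_le_n; rewrite !(bigD1 i0 Pi0) /= !mulnA.
apply: leq_mul; first by rewrite mulSn mulnS leq_add2r.
by apply: leq_prod => i _; exact: leqnSn.
Qed.

Section EqualObservations.
Variable R : realType.

Definition marg_equal (t : R) (a : nat) : R :=
  (Num.sqrt (2 * pi))^-1 ^+ a * (Num.sqrt a.+1%:R)^-1 *
  expR (t ^+ 2 / 2 * (a%:R ^+ 2 / a.+1%:R - a%:R)).

Lemma complete_square (t th : R) (a : nat) :
  a%:R * (- (t - th) ^+ 2 / 2) + - th ^+ 2 / 2 =
  t ^+ 2 / 2 * (a%:R ^+ 2 / a.+1%:R - a%:R)
  + - (th - a%:R * t / a.+1%:R) ^+ 2 / (a.+1%:R^-1 *+ 2).
Proof. by rewrite -natr1; field; rewrite addrC natr1 pnatr_eq0. Qed.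

Lemma kern_expX_q0E (t th : R) (a : nat) :
  kern t th ^+ a * q0 th =
  marg_equal t a * normal_pdf (a%:R * t / a.+1%:R) (Num.sqrt a.+1%:R)^-1 th.
Proof.
have a1_gt0 : (0 : R) < a.+1%:R by rewrite ltr0n.
have sqrt_a1_gt0 : 0 < Num.sqrt (a.+1%:R : R) by rewrite sqrtr_gt0.
have sqrt_2pi_gt0 : 0 < Num.sqrt (2 * pi : R) by rewrite sqrtr_gt0 mulr_gt0 ?pi_gt0.
rewrite normal_pdfE ?invr_eq0 ?gt_eqF //.
rewrite /marg_equal /kern /q0 /gauss_pdf /normal_peak /normal_fun.
have -> : (Num.sqrt a.+1%:R)^-1 ^+ 2 = a.+1%:R^-1 :> R.
  by rewrite exprVn sqr_sqrtr ?ltW.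
have -> : Num.sqrt (a.+1%:R^-1 * pi *+ 2) =
    (Num.sqrt a.+1%:R)^-1 * Num.sqrt (2 * pi) :> R.
  by rewrite -mulrnAr -[pi *+ 2]mulr_natl sqrtrM ?invr_ge0 ?ltW // sqrtrV ?ltW.
rewrite exprMn -expRM_natl subr0 invfM invrK.
transitivity ((Num.sqrt (2 * pi))^-1 ^+ a.+1 *
  expR (a%:R * (- (t - th) ^+ 2 / 2) + - th ^+ 2 / 2)).
  by rewrite expRD [_ ^+ a.+1]exprS; ring.
by rewrite complete_square expRD [_ ^+ a.+1]exprS; field; rewrite !gt_eqF.
Qed.

Lemma marg_constE (n : nat) (t : R) (x : 'I_n -> R) (B : {set 'I_n}) :
  (forall i, x i = t) -> marg x B = marg_equal t #|B|.
Proof.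
move=> xt; rewrite /marg.
under eq_Rintegral => th _.
  rewrite (eq_bigr (fun=> kern t th)) => [|i _]; last by rewrite xt.
  rewrite prodr_const kern_expX_q0E.
  over.
rewrite RintegralZl //; last exact: integrable_normal_pdf.
by rewrite /Rintegral integral_normal_pdf mulr1.
Qed.

Lemma prod_marg_equal_ratio (I : finType) (P : {pred I}) (a : I -> nat)
    (n : nat) (t : R) :
  (\sum_(i in P) a i)%N = n ->
  (\prod_(i in P) marg_equal t (a i)) / marg_equal t n =
  Num.sqrt (n.+1%:R / \prod_(i in P) (a i).+1%:R) *
  expR (t ^+ 2 / 2 * (- (n%:R ^+ 2 / n.+1%:R) +
                      \sum_(i in P) (a i)%:R ^+ 2 / (a i).+1%:R)).
Proof.
move=> sum_a.
set P1 : R := \prod_(i in P) (a i).+1%:R.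
have P1_gt0 : 0 < P1 by apply: prodr_gt0 => i _; rewrite ltr0n.
rewrite /marg_equal !big_split /= prodrXr sum_a prodfV -expR_sum.
rewrite sqrtr_prod ?ler0n // -/P1 (@sqrtrM _ n.+1%:R) ?ler0n // sqrtrV ?ltW //.
have -> : \sum_(i in P) t ^+ 2 / 2 * ((a i)%:R ^+ 2 / (a i).+1%:R - (a i)%:R)
    = t ^+ 2 / 2 * (\sum_(i in P) (a i)%:R ^+ 2 / (a i).+1%:R - n%:R).
  by rewrite -sum_a natr_sum -sumrB mulr_sumr.
set S := \sum_(i in P) _.
have -> : t ^+ 2 / 2 * (- (n%:R ^+ 2 / n.+1%:R) + S) =
    t ^+ 2 / 2 * (S - n%:R) - t ^+ 2 / 2 * (n%:R ^+ 2 / n.+1%:R - n%:R).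
  by ring.
rewrite [in RHS]expRD expRN; field.
by rewrite !gt_eqF ?expR_gt0 ?sqrtr_gt0 ?ltr0n ?exprn_gt0 ?invr_gt0 ?sqrtr_gt0
  ?mulr_gt0 ?pi_gt0.
Qed.

Lemma ratio_closed_form_le (I : finType) (P : {pred I}) (a : I -> nat)
    (n : nat) (t : R) i0 :
  i0 \in P -> (forall i, i \in P -> 0 < a i)%N -> (\sum_(i in P) a i)%N = n ->
  Num.sqrt (n.+1%:R / \prod_(i in P) (a i).+1%:R) *
  expR (t ^+ 2 / 2 * (- (n%:R ^+ 2 / n.+1%:R) +
                      \sum_(i in P) (a i)%:R ^+ 2 / (a i).+1%:R))
  <= Num.sqrt (n%:R / \prod_(i in P) (a i)%:R).
Proof.
move=> Pi0 a_gt0 sum_a.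
have P0_gt0 : 0 < \prod_(i in P) (a i)%:R :> R.
  by apply: prodr_gt0 => i Pi; rewrite ltr0n a_gt0.
have P1_gt0 : 0 < \prod_(i in P) (a i).+1%:R :> R.
  by apply: prodr_gt0 => i _; rewrite ltr0n.
apply: (@le_trans _ _ (Num.sqrt (n.+1%:R / \prod_(i in P) (a i).+1%:R))).
  rewrite ler_piMr ?sqrtr_ge0 // expR_le1 mulr_ge0_le0 ?divr_ge0 ?sqr_ge0 //.
  by rewrite addrC subr_le0 sum_sqr_div_succ_le.
rewrite ler_sqrt; last by rewrite divr_ge0 ?ler0n ?ltW.
rewrite ler_pdivlMr // mulrAC ler_pdivrMr //.
rewrite -!natr_prod -!natrM ler_nat.
by apply: (succ_mul_prod_le Pi0); rewrite -sum_a leq_term_sum.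
Qed.

End EqualObservations.

Theorem lemmaS19 (R : realType) (n : nat) (theta_star : R) (x : 'I_n -> R)
    (hx : forall i, x i = theta_star) (s : nat) (A : {set {set 'I_n}})
    (hs1 : (1 <= s)%N) (hsn : (s <= n)%N)
    (hA : finset.partition A [set: 'I_n]) (hcard : #|A| = s) :
  (\prod_(B in A) marg x B) / marg x [set: 'I_n] =
    Num.sqrt (n.+1%:R / \prod_(B in A) (#|B|.+1)%:R) *
    expR (theta_star ^+ 2 / 2 *
          (- ((n%:R) ^+ 2 / n.+1%:R) +
           \sum_(B in A) ((#|B|%:R) ^+ 2 / (#|B|.+1)%:R)))
  /\
  Num.sqrt (n.+1%:R / \prod_(B in A) (#|B|.+1)%:R) *
    expR (theta_star ^+ 2 / 2 *
          (- ((n%:R) ^+ 2 / n.+1%:R) +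
           \sum_(B in A) ((#|B|%:R) ^+ 2 / (#|B|.+1)%:R)))
  <= Num.sqrt (n%:R / \prod_(B in A) (#|B|)%:R).
Proof.
have sum_card : (\sum_(B in A) #|B|)%N = n.
  by rewrite -(card_partition hA) cardsT card_ord.
have block_card_gt0 B : B \in A -> (0 < #|B|)%N.
  by move=> BA; rewrite card_gt0 (partition_neq0 hA BA).
have [B0 B0A] : exists B0, B0 \in A.
  by apply/set0Pn; rewrite -card_gt0 hcard.
rewrite (marg_constE _ hx) cardsT card_ord.
rewrite (eq_bigr _ (fun B _ => marg_constE B hx)).
pose card_of (B : {set 'I_n}) := #|B|.
split; first exact: (prod_marg_equal_ratio (P := A) (a := card_of) _ sum_card).
exact: (ratio_closed_form_le (P := A) (a := card_of) _ B0A block_card_gt0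
  sum_card).
Qed.
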